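(* Let $E_0>0$ and let $\phi$ satisfy the standing assumptions below with some $n\in\{0,1,2,\dots\}$. Then there exists $0<V^*<E_0$ such that for all $V\in[V^*,E_0)$, $\frac{\xi_{1/2}(V)}{\xi_{-1/2}(V)}\le\frac{101\,(E_0+V)(E_0-V)}{100\,(3+2n)\,V^2}$.
   Context: Standing assumptions on $\phi:(-\infty,1]\to\mathbb R_+$: $\phi(x)=0$ for $x<0$, $\phi$ analytic on $[0,1]$, and $\phi'(0)=\dots=\phi^{(n-1)}(0)=0$, $\phi^{(n)}(0)>0$. For $\kappa\in\{\frac32,\frac12,-\frac12\}$ and $V\in(0,E_0]$: $\xi_\kappa(V)=\frac{4\pi}{V}\int_V^{E_0}\phi(1-E/E_0)\left(\frac{E^2}{V^2}-1\right)^\kappa dE$. *)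

From Stdlib Require Import Reals Lra Arith Factorial.
Open Scope R_scope.

(* phi : (-oo,1] -> R_+ is modelled as a total function R -> R; only its
   values on (-oo,1] matter. *)

Definition analytic_on_01 (phi : R -> R) : Prop :=
  forall x0, 0 <= x0 <= 1 ->
    exists r, 0 < r /\ exists a : nat -> R,
      forall x, 0 <= x <= 1 -> Rabs (x - x0) < r ->
        infinite_sum (fun k => a k * (x - x0) ^ k) (phi x).

(* [d] is the k-th (right) derivative of phi at 0, as an analytic function on
   [0,1]: phi(x) = sum_j a_j x^j on [0, r) and d = k! * a_k. *)
Definition rderiv0 (phi : R -> R) (k : nat) (d : R) : Prop :=
  exists r, 0 < r /\ exists a : nat -> R,
    (forall x, 0 <= x <= 1 -> x < r ->
       infinite_sum (fun j => a j * x ^ j) (phi x)) /\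
    d = INR (fact k) * a k.

Definition phi_assumptions (phi : R -> R) (n : nat) : Prop :=
  (forall x, x <= 1 -> 0 <= phi x) /\
  (forall x, x < 0 -> phi x = 0) /\
  analytic_on_01 phi /\
  (forall k, (k < n)%nat -> rderiv0 phi k 0) /\
  (exists d, rderiv0 phi n d /\ 0 < d).

Definition improper_int_left (f : R -> R) (a b I : R) : Prop :=
  forall eps, 0 < eps -> exists delta, 0 < delta /\
    forall c, a < c < b -> c - a < delta ->
      exists pr : Riemann_integrable f c b, Rabs (RiemannInt pr - I) < eps.

Definition xi_integrand (phi : R -> R) (E0 kappa V : R) (E : R) : R :=
  phi (1 - E / E0) * Rpower ((E / V) ^ 2 - 1) kappa.

Definition is_xi (phi : R -> R) (E0 kappa V x : R) : Prop :=
  exists I, improper_int_left (xi_integrand phi E0 kappa V) V E0 I /\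
            x = 4 * PI / V * I.

(* The substitution E = V sqrt(1 + w^2) turns xi_kappa(V) into the proper integral
   (4 pi / V) int_0^W V phi(X(w)) w^(2 kappa + 1) / sqrt(1 + w^2) dw, where
   W = sqrt((E0/V)^2 - 1) and X(w) = 1 - V sqrt(1 + w^2) / E0.  With rho = V / E0 the
   argument X(w) lies between rho^2 (W^2 - w^2) / 2 and rho (W^2 - w^2) / 2, and
   phi(y) is within a factor 1 +- eta of c y^n near 0, c being its first non-zero
   Taylor coefficient.  Hence xi_(1/2) and xi_(-1/2) are, up to factors tending to 1 as
   V -> E0, multiples of int_0^W (W^2 - w^2)^n w^2 and int_0^W (W^2 - w^2)^n, whose ratio
   is W^2 / (2n + 3) by an integration by parts; finally W^2 = (E0 + V)(E0 - V) / V^2,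
   and the slack 101/100 absorbs the factors once V is close enough to E0. *)

From Stdlib Require Import Reals Lra Lia Factorial.
From Coquelicot Require Import Coquelicot.
Open Scope R_scope.

Lemma PSeries_of_infinite_sum (a : nat -> R) (x l : R) :
  infinite_sum (fun k => a k * x ^ k) l -> PSeries a x = l.
Proof.
  intros Hs. apply is_pseries_unique, is_pseries_R, is_series_Reals, Hs.
Qed.

Lemma CV_radius_ge_of_infinite_sum (a : nat -> R) (x l : R) :
  infinite_sum (fun k => a k * x ^ k) l -> Rbar_le (Rabs x) (CV_radius a).
Proof.
  intros Hs. apply (proj1 (CV_radius_bounded a)).
  assert (Hlim : Un_cv (fun k => a k * x ^ k) 0).
  { apply is_lim_seq_Reals, ex_series_lim_0. exists l. now apply is_series_Reals. }
  destruct (maj_by_pos _ (exist _ 0 Hlim)) as [M [_ HM]].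
  exists M. intros k. now rewrite Rabs_mult, RPow_abs, Rabs_Rabsolu, <- Rabs_mult.
Qed.

Lemma infinite_sum_pseries_minus (a b : nat -> R) (x la lb : R) :
  infinite_sum (fun k => a k * x ^ k) la -> infinite_sum (fun k => b k * x ^ k) lb ->
  infinite_sum (fun k => (a k - b k) * x ^ k) (la - lb).
Proof.
  intros Ha Hb. apply is_series_Reals.
  apply (is_series_ext (fun k => plus (a k * x ^ k) (opp (b k * x ^ k)))).
  - intros k. unfold plus, opp; simpl. ring.
  - exact (is_series_minus _ _ la lb (proj2 (is_series_Reals _ _) Ha) (proj2 (is_series_Reals _ _) Hb)).
Qed.

Lemma CV_radius_decr_n (a : nat -> R) (m : nat) : CV_radius (PS_decr_n a m) = CV_radius a.
Proof.
  induction m as [|m IH].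
  - apply CV_radius_ext. reflexivity.
  - rewrite <- IH, <- (CV_radius_decr_1 (PS_decr_n a m)).
    apply CV_radius_ext. intros k. unfold PS_decr_1, PS_decr_n. f_equal. lia.
Qed.

Lemma continuity_pt_right_const (f : R -> R) (x0 d v : R) :
  continuity_pt f x0 -> 0 < d -> (forall x, x0 < x < x0 + d -> f x = v) -> f x0 = v.
Proof.
  intros Hf Hd Hv. apply Rminus_diag_uniq, Rabs_eq_0.
  apply Rle_antisym; [|apply Rabs_pos]. apply Rnot_lt_le. intros Hpos.
  destruct (Hf _ Hpos) as [e [He Hclose]].
  assert (Hm := Rmin_pos e d He Hd). pose proof (Rmin_l e d). pose proof (Rmin_r e d).
  set (x := x0 + Rmin e d / 2).
  assert (Hfx : f x - f x0 = - (f x0 - v)) by (rewrite (Hv x) by (unfold x; lra); ring).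
  specialize (Hclose x). simpl in Hclose. unfold R_dist in Hclose.
  rewrite Hfx, Rabs_Ropp in Hclose. apply (Rlt_irrefl (Rabs (f x0 - v))), Hclose.
  split; [split; [exact I | unfold x; lra] |].
  unfold x. rewrite Rabs_right; lra.
Qed.

Lemma PSeries_decr_n_continuous_0 (a : nat -> R) (m : nat) :
  Rbar_lt 0 (CV_radius a) -> continuity_pt (PSeries (PS_decr_n a m)) 0.
Proof.
  intros Ha. apply PSeries_continuity. now rewrite Rabs_R0, CV_radius_decr_n.
Qed.

Lemma PSeries_decr_n_0 (a : nat -> R) (m : nat) : PSeries (PS_decr_n a m) 0 = a m.
Proof. rewrite PSeries_0. unfold PS_decr_n. now rewrite Nat.add_0_r. Qed.

Lemma pseries_coef_zero (a : nat -> R) (r : R) : 0 < r ->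
  (forall x, 0 <= x < r -> infinite_sum (fun k => a k * x ^ k) 0) -> forall k, a k = 0.
Proof.
  intros Hr Ha.
  assert (Hrad : Rbar_lt 0 (CV_radius a)).
  { apply (Rbar_lt_le_trans _ (Rabs (r / 2))); [simpl; rewrite Rabs_right; lra|].
    apply (CV_radius_ge_of_infinite_sum _ _ 0), Ha. lra. }
  intros k. induction k as [k IH] using (well_founded_induction Wf_nat.lt_wf).
  rewrite <- PSeries_decr_n_0.
  apply (continuity_pt_right_const _ _ r _ (PSeries_decr_n_continuous_0 a k Hrad) Hr).
  intros x Hx.
  assert (Hxk : 0 < x ^ k) by (apply pow_lt; lra).
  apply (Rmult_eq_reg_l (x ^ k)); [|lra].
  rewrite Rmult_0_r, <- PSeries_decr_n_aux by exact IH.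
  apply PSeries_of_infinite_sum, Ha. lra.
Qed.

Lemma PSeries_leading_term_bounds (a : nat -> R) (m : nat) (eta : R) :
  Rbar_lt 0 (CV_radius a) -> (forall k, (k < m)%nat -> a k = 0) -> 0 < a m -> 0 < eta ->
  exists d, 0 < d /\ forall y, 0 <= y < d ->
    (1 - eta) * a m * y ^ m <= PSeries a y <= (1 + eta) * a m * y ^ m.
Proof.
  intros Hrad Hlow Ham Heta.
  destruct (PSeries_decr_n_continuous_0 a m Hrad (eta * a m) ltac:(nra)) as [d [Hd Hclose]].
  exists d. split; [lra|]. intros y Hy.
  rewrite (PSeries_decr_n_aux a m y Hlow).
  assert (Hg : Rabs (PSeries (PS_decr_n a m) y - a m) < eta * a m).
  { destruct (Req_dec y 0) as [->|Hy0].
    - rewrite PSeries_decr_n_0, Rminus_diag, Rabs_R0. nra.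
    - assert (Hy' : D_x no_cond 0 y /\ Rabs (y - 0) < d).
      { split; [split; [exact I | auto] |]. rewrite Rminus_0_r, Rabs_right; lra. }
      generalize (Hclose y Hy'). simpl. unfold R_dist. now rewrite PSeries_decr_n_0. }
  apply Rabs_lt_between' in Hg.
  assert (Hym : 0 <= y ^ m) by (apply pow_le; lra).
  split; nra.
Qed.

Lemma rderiv0_coef (phi : R -> R) (k : nat) (d r : R) (a : nat -> R) :
  0 < r -> (forall x, 0 <= x <= 1 -> x < r -> infinite_sum (fun j => a j * x ^ j) (phi x)) ->
  rderiv0 phi k d -> d = INR (fact k) * a k.
Proof.
  intros Hr Ha [r' [Hr' [b [Hb ->]]]].
  assert (Hab : forall j, a j - b j = 0).
  { apply (pseries_coef_zero _ (Rmin (Rmin r r') 1)); [repeat apply Rmin_pos; lra|].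
    intros x Hx. pose proof (Rmin_l (Rmin r r') 1). pose proof (Rmin_r (Rmin r r') 1).
    pose proof (Rmin_l r r'). pose proof (Rmin_r r r').
    rewrite <- (Rminus_diag (phi x)).
    apply infinite_sum_pseries_minus; [apply Ha | apply Hb]; lra. }
  now rewrite (Rminus_diag_uniq _ _ (Hab k)).
Qed.

Lemma phi_local_bounds (phi : R -> R) (n : nat) (eta : R) :
  0 < eta -> phi_assumptions phi n ->
  exists c d, 0 < c /\ 0 < d /\
    forall y, 0 <= y <= d -> (1 - eta) * c * y ^ n <= phi y <= (1 + eta) * c * y ^ n.
Proof.
  intros Heta [_ [_ [_ [Hlow [dn [Hdn Hdn0]]]]]].
  destruct Hdn as [r [Hr [a [Ha Hdna]]]].
  assert (Hlow' : forall k, (k < n)%nat -> a k = 0).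
  { intros k Hk. pose proof (INR_fact_lt_0 k).
    pose proof (rderiv0_coef phi k 0 r a Hr Ha (Hlow k Hk)). nra. }
  assert (Han : 0 < a n) by (pose proof (INR_fact_lt_0 n); nra).
  set (r1 := Rmin r 1 / 2).
  assert (Hr1 : 0 < r1 /\ r1 < r /\ r1 < 1).
  { unfold r1. pose proof (Rmin_l r 1). pose proof (Rmin_r r 1).
    pose proof (Rmin_pos r 1 Hr Rlt_0_1). lra. }
  assert (Hrad : Rbar_lt 0 (CV_radius a)).
  { apply (Rbar_lt_le_trans _ (Rabs r1)); [simpl; rewrite Rabs_right; lra|].
    apply (CV_radius_ge_of_infinite_sum _ _ (phi r1)), Ha; lra. }
  destruct (PSeries_leading_term_bounds a n eta Hrad Hlow' Han Heta) as [d [Hd Hbounds]].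
  exists (a n), (Rmin (d / 2) r1).
  pose proof (Rmin_l (d / 2) r1). pose proof (Rmin_r (d / 2) r1).
  split; [lra|]. split; [apply Rmin_pos; lra|].
  intros y Hy. rewrite <- (PSeries_of_infinite_sum a y (phi y)) by (apply Ha; lra).
  apply Hbounds. lra.
Qed.

(* phi is constrained only on (-oo, 1] and may jump at 0 (when n = 0); clamping its
   argument at 0 gives a function that is continuous on (-oo, 1). *)
Definition phi_clamp (phi : R -> R) (y : R) : R := phi (Rmax 0 y).

Lemma Rmax_0_lipschitz (x y : R) : Rabs (Rmax 0 x - Rmax 0 y) <= Rabs (x - y).
Proof. unfold Rmax, Rabs. repeat destruct Rle_dec; repeat destruct Rcase_abs; lra. Qed.

Lemma phi_clamp_continuity (phi : R -> R) (y : R) :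
  analytic_on_01 phi -> y < 1 -> continuity_pt (phi_clamp phi) y.
Proof.
  intros Han Hy.
  set (z0 := Rmax 0 y).
  assert (Hz0 : 0 <= z0 < 1) by (split; [apply Rmax_l | apply Rmax_lub_lt; lra]).
  destruct (Han z0 ltac:(lra)) as [r [Hr [a Ha]]].
  set (s := Rmin r (1 - z0) / 2).
  assert (Hs : 0 < s /\ s < r /\ z0 + s <= 1).
  { unfold s. pose proof (Rmin_l r (1 - z0)). pose proof (Rmin_r r (1 - z0)).
    pose proof (Rmin_pos r (1 - z0) Hr ltac:(lra)). lra. }
  assert (Hphi : forall x, 0 <= x <= 1 -> Rabs (x - z0) < r -> phi x = PSeries a (x - z0)).
  { intros x Hx Hxr. symmetry. now apply PSeries_of_infinite_sum, Ha. }
  assert (Hcont : continuity_pt (PSeries a) 0).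
  { apply PSeries_continuity. rewrite Rabs_R0.
    apply (Rbar_lt_le_trans _ (Rabs s)); [simpl; rewrite Rabs_right; lra|].
    assert (Hzs : z0 + s - z0 = s) by ring.
    assert (Hsum := Ha (z0 + s) ltac:(lra) ltac:(rewrite Hzs, Rabs_right; lra)).
    rewrite Hzs in Hsum. exact (CV_radius_ge_of_infinite_sum _ _ _ Hsum). }
  intros eps Heps. destruct (Hcont eps Heps) as [d [Hd Hclose]].
  exists (Rmin d (Rmin r (1 - y))). split; [repeat apply Rmin_pos; lra|].
  intros x [_ Hx]. simpl in Hx |- *. unfold R_dist in Hx |- *. unfold phi_clamp. fold z0.
  pose proof (Rmin_l d (Rmin r (1 - y))). pose proof (Rmin_r d (Rmin r (1 - y))).
  pose proof (Rmin_l r (1 - y)). pose proof (Rmin_r r (1 - y)).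
  pose proof (Rmax_0_lipschitz x y) as Hlip. fold z0 in Hlip.
  assert (Hx1 : Rmax 0 x <= 1) by (apply Rmax_lub; [lra|]; pose proof (Rle_abs (x - y)); lra).
  rewrite (Hphi (Rmax 0 x)), (Hphi z0)
    by (try split; try apply Rmax_l; try rewrite Rminus_diag, Rabs_R0; lra).
  rewrite Rminus_diag.
  destruct (Req_dec (Rmax 0 x - z0) 0) as [Hx0|Hx0].
  - rewrite Hx0, Rminus_diag, Rabs_R0. lra.
  - apply Hclose. split; [split; [exact I | auto] |]. simpl. unfold R_dist. rewrite Rminus_0_r. lra.
Qed.

Definition hypot1 (w : R) : R := sqrt (1 + w ^ 2).

Definition w_of (V E : R) : R := sqrt ((E / V) ^ 2 - 1).

Lemma hypot1_ge_1 (w : R) : 1 <= hypot1 w.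
Proof. unfold hypot1. rewrite <- sqrt_1 at 1. apply sqrt_le_1_alt. pose proof (pow2_ge_0 w). lra. Qed.

Lemma hypot1_sq (w : R) : hypot1 w ^ 2 = 1 + w ^ 2.
Proof. unfold hypot1. apply pow2_sqrt. pose proof (pow2_ge_0 w). lra. Qed.

Lemma hypot1_continuous (w : R) : continuous hypot1 w.
Proof. apply continuous_sqrt_comp, (ex_derive_continuous (V := R_NormedModule)). auto_derive. auto. Qed.

Lemma hypot1_le (w w' : R) : 0 <= w <= w' -> hypot1 w <= hypot1 w'.
Proof. intros Hw. apply sqrt_le_1_alt. nra. Qed.

Lemma w_of_sq (V E : R) : 0 < V <= E -> w_of V E ^ 2 = (E / V) ^ 2 - 1.
Proof.
  intros HVE. unfold w_of. apply pow2_sqrt.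
  assert (1 <= E / V) by (apply Rle_div_r; lra). nra.
Qed.

Lemma w_of_self (V : R) : V <> 0 -> w_of V V = 0.
Proof.
  intros HV. unfold w_of. replace ((V / V) ^ 2 - 1) with 0 by (field; exact HV). apply sqrt_0.
Qed.

Lemma w_of_pos (V E : R) : 0 < V < E -> 0 < w_of V E.
Proof.
  intros HVE. unfold w_of. apply sqrt_lt_R0.
  assert (1 < E / V) by (apply Rlt_div_r; lra). nra.
Qed.

Lemma w_of_le (V E E' : R) : 0 < V <= E -> E <= E' -> w_of V E <= w_of V E'.
Proof.
  intros HVE HEE. apply sqrt_le_1_alt.
  assert (1 <= E / V <= E' / V) by (split; [apply Rle_div_r | apply Rmult_le_compat_r;
    [left; apply Rinv_0_lt_compat|]]; lra). nra.
Qed.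

Lemma hypot1_w_of (V E : R) : 0 < V <= E -> V * hypot1 (w_of V E) = E.
Proof.
  intros HVE. unfold hypot1. rewrite w_of_sq by lra.
  replace (1 + ((E / V) ^ 2 - 1)) with ((E / V) ^ 2) by ring.
  rewrite sqrt_pow2; [field; lra|]. apply Rle_div_r; lra.
Qed.

Lemma RInt_subst_hypot1 (f : R -> R) (V c E : R) : 0 < V < c -> c <= E ->
  (forall x, c <= x <= E -> continuous f x) ->
  is_RInt (fun w => V * w / hypot1 w * f (V * hypot1 w)) (w_of V c) (w_of V E) (RInt f c E).
Proof.
  intros HVc HcE Hf.
  pose proof (w_of_le V c E ltac:(lra) HcE) as Hab.
  pose proof (w_of_pos V c HVc) as Hc0.
  assert (H := is_RInt_comp f (fun w => V * hypot1 w) (fun w => V * w / hypot1 w)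
                 (w_of V c) (w_of V E)).
  cbv beta in H. rewrite !hypot1_w_of, Rmin_left, Rmax_right in H by lra.
  apply H.
  - intros x Hx. apply Hf. rewrite <- (hypot1_w_of V c), <- (hypot1_w_of V E) by lra.
    split; apply Rmult_le_compat_l; try lra; apply hypot1_le; lra.
  - intros x _. pose proof (hypot1_ge_1 x). split.
    + unfold hypot1 in *. auto_derive; [pose proof (pow2_ge_0 x); lra|].
      replace (x * (x * 1)) with (x ^ 2) by ring. field. lra.
    + apply (continuous_mult (fun w => V * w) (fun w => / hypot1 w)).
      * apply (ex_derive_continuous (V := R_NormedModule)). auto_derive. auto.
      * apply continuous_Rinv_comp; [apply hypot1_continuous | lra].
Qed.

Lemma Rpower_sq_pred_half (w : R) (p : nat) :
  0 < w -> w * Rpower (w ^ 2) ((INR p - 1) / 2) = w ^ p.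
Proof.
  intros Hw. rewrite <- (Rpower_pow 2 w), Rpower_mult, <- (Rpower_pow p w), <- (Rpower_1 w) at 1 by lra.
  rewrite <- Rpower_plus. f_equal. simpl. field.
Qed.

(* The xi_kappa integrand after E = V * hypot1 w, for kappa = (p - 1) / 2. *)
Definition xi_w_integrand (phi : R -> R) (E0 V : R) (p : nat) (w : R) : R :=
  V * phi_clamp phi (1 - V * hypot1 w / E0) * w ^ p / hypot1 w.

Lemma xi_w_integrand_continuous (phi : R -> R) (E0 V : R) (p : nat) (w : R) :
  analytic_on_01 phi -> 0 < V -> 0 < E0 -> continuous (xi_w_integrand phi E0 V p) w.
Proof.
  intros Han HV HE0.
  assert (Hhyp : forall x, 0 < hypot1 x) by (intros x; pose proof (hypot1_ge_1 x); lra).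
  assert (Hext : forall x, phi_clamp phi (1 - V * hypot1 x / E0) * ((V * x ^ p) * / hypot1 x)
                          = xi_w_integrand phi E0 V p x).
  { intros x. unfold xi_w_integrand. field. apply Rgt_not_eq, Hhyp. }
  apply (continuous_ext _ _ w Hext).
  apply (continuous_mult (fun x => phi_clamp phi (1 - V * hypot1 x / E0))).
  - apply (continuous_comp (fun x => 1 - V * hypot1 x / E0) (phi_clamp phi)).
    + apply (ex_derive_continuous (V := R_NormedModule)). unfold hypot1. auto_derive.
      pose proof (pow2_ge_0 w). lra.
    + apply continuity_pt_filterlim, phi_clamp_continuity; [exact Han|].
      assert (0 < V * hypot1 w / E0) by (apply Rdiv_lt_0_compat; [apply Rmult_lt_0_compat|]; auto). lra.
  - apply (continuous_mult (fun x => V * x ^ p)).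
    + apply (ex_derive_continuous (V := R_NormedModule)). auto_derive. auto.
    + apply continuous_Rinv_comp; [apply hypot1_continuous | apply Rgt_not_eq, Hhyp].
Qed.

Definition xi_clamped_integrand (phi : R -> R) (E0 kappa V E : R) : R :=
  phi_clamp phi (1 - E / E0) * Rpower ((E / V) ^ 2 - 1) kappa.

Lemma xi_clamped_integrand_continuous (phi : R -> R) (E0 V kappa E : R) :
  analytic_on_01 phi -> 0 < V < E -> 0 < E0 -> continuous (xi_clamped_integrand phi E0 kappa V) E.
Proof.
  intros Han HVE HE0. unfold xi_clamped_integrand.
  assert (Hu : 0 < (E / V) ^ 2 - 1) by (assert (1 < E / V) by (apply Rlt_div_r; lra); nra).
  apply (continuous_mult (fun E => phi_clamp phi (1 - E / E0))).
  - apply (continuous_comp (fun E => 1 - E / E0) (phi_clamp phi)).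
    + apply (ex_derive_continuous (V := R_NormedModule)). auto_derive. lra.
    + apply continuity_pt_filterlim, phi_clamp_continuity; [exact Han|].
      assert (0 < E / E0) by (apply Rdiv_lt_0_compat; lra). lra.
  - apply (ex_derive_continuous (V := R_NormedModule)). unfold Rpower. auto_derive.
    replace (E * / V * (E * / V * 1) + - (1)) with ((E / V) ^ 2 - 1) by (simpl; field; lra). lra.
Qed.

Lemma w_of_continuous_at_V (V : R) : 0 < V -> continuous (w_of V) V.
Proof.
  intros HV. apply continuous_sqrt_comp, (ex_derive_continuous (V := R_NormedModule)).
  auto_derive. lra.
Qed.

Lemma xi_integrand_clamped (phi : R -> R) (E0 kappa V E : R) : 0 < E0 -> E <= E0 ->
  xi_integrand phi E0 kappa V E = xi_clamped_integrand phi E0 kappa V E.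
Proof.
  intros HE0 HE. unfold xi_integrand, xi_clamped_integrand, phi_clamp.
  rewrite Rmax_right; [reflexivity|].
  assert (E / E0 <= 1) by (apply Rle_div_l; lra). lra.
Qed.

Lemma xi_w_integrand_subst (phi : R -> R) (E0 V w : R) (p : nat) : 0 < V -> 0 < w ->
  V * w / hypot1 w * xi_clamped_integrand phi E0 ((INR p - 1) / 2) V (V * hypot1 w) =
  xi_w_integrand phi E0 V p w.
Proof.
  intros HV Hw. pose proof (hypot1_ge_1 w). unfold xi_w_integrand, xi_clamped_integrand.
  replace (V * hypot1 w / V) with (hypot1 w) by (field; lra).
  rewrite hypot1_sq. replace (1 + w ^ 2 - 1) with (w ^ 2) by ring.
  rewrite <- (Rpower_sq_pred_half w p) by lra. field. lra.
Qed.

Lemma RInt_xi_integrand_transformed (phi : R -> R) (E0 V c : R) (p : nat) :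
  analytic_on_01 phi -> 0 < V < c -> c < E0 ->
  RInt (xi_integrand phi E0 ((INR p - 1) / 2) V) c E0 =
  RInt (xi_w_integrand phi E0 V p) (w_of V c) (w_of V E0).
Proof.
  intros Han HVc HcE.
  set (kappa := (INR p - 1) / 2).
  set (f := xi_clamped_integrand phi E0 kappa V).
  transitivity (RInt f c E0).
  { apply RInt_ext. rewrite Rmin_left, Rmax_right by lra. intros E HE.
    apply xi_integrand_clamped; lra. }
  rewrite <- (is_RInt_unique _ _ _ _ (RInt_subst_hypot1 f V c E0 HVc ltac:(lra)
    (fun E HE => xi_clamped_integrand_continuous phi E0 V kappa E Han ltac:(lra) ltac:(lra)))).
  apply RInt_ext. rewrite Rmin_left, Rmax_right by (apply w_of_le; lra).
  intros w [Hw _]. apply xi_w_integrand_subst; [lra|]. pose proof (w_of_pos V c HVc). lra.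
Qed.

Lemma is_xi_transformed (phi : R -> R) (E0 V : R) (p : nat) :
  analytic_on_01 phi -> 0 < V < E0 ->
  is_xi phi E0 ((INR p - 1) / 2) V (4 * PI / V * RInt (xi_w_integrand phi E0 V p) 0 (w_of V E0)).
Proof.
  intros Han HVE.
  set (g := xi_w_integrand phi E0 V p).
  assert (Hg : forall x, continuous g x) by (intros x; apply xi_w_integrand_continuous; auto; lra).
  assert (Hex : forall a b, ex_RInt g a b)
    by (intros a b; apply (ex_RInt_continuous (V := R_CompleteNormedModule)); auto).
  (* The integral over (c, E0) is int_0^W g - F c, and F is continuous at V with F V = 0. *)
  set (F := fun c => RInt g 0 (w_of V c)).
  assert (HF0 : F V = 0).
  { unfold F. rewrite w_of_self by lra. exact (RInt_point _ _). }
  assert (HF : continuity_pt F V).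
  { apply continuity_pt_filterlim, (continuous_comp (w_of V) (fun a => RInt g 0 a)).
    - apply w_of_continuous_at_V. lra.
    - rewrite w_of_self by lra.
      apply (continuous_RInt_0 g 0 (fun a => RInt g 0 a)), filter_forall.
      intros a. apply (RInt_correct (V := R_CompleteNormedModule)), Hex. }
  exists (RInt g 0 (w_of V E0)). split; [|reflexivity].
  intros eps Heps. destruct (HF eps Heps) as [d [Hd Hclose]].
  exists d. split; [exact Hd|]. intros c Hc Hcd.
  assert (Hint : RInt (xi_integrand phi E0 ((INR p - 1) / 2) V) c E0 = RInt g 0 (w_of V E0) - F c).
  { rewrite RInt_xi_integrand_transformed by (auto; lra).
    assert (HC : RInt g 0 (w_of V c) + RInt g (w_of V c) (w_of V E0) = RInt g 0 (w_of V E0))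
      by exact (RInt_Chasles g _ _ _ (Hex _ _) (Hex _ _)).
    unfold F. fold g. lra. }
  assert (Hexi : ex_RInt (xi_integrand phi E0 ((INR p - 1) / 2) V) c E0).
  { apply (ex_RInt_ext (xi_clamped_integrand phi E0 ((INR p - 1) / 2) V)).
    - rewrite Rmin_left, Rmax_right by lra. intros E HE. symmetry. apply xi_integrand_clamped; lra.
    - apply (ex_RInt_continuous (V := R_CompleteNormedModule)). rewrite Rmin_left, Rmax_right by lra.
      intros E HE. apply xi_clamped_integrand_continuous; auto; lra. }
  exists (ex_RInt_Reals_0 _ _ _ Hexi). rewrite <- RInt_Reals, Hint.
  replace (RInt g 0 (w_of V E0) - F c - RInt g 0 (w_of V E0)) with (- (F c - F V))
    by (rewrite HF0; ring).
  rewrite Rabs_Ropp. apply Hclose. split; [split; [exact I | lra] |].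
  simpl. unfold R_dist. rewrite Rabs_right; lra.
Qed.

Lemma ex_RInt_of_ex_derive (f : R -> R) (a b : R) : (forall x, ex_derive f x) -> ex_RInt f a b.
Proof.
  intros Hf. apply (ex_RInt_continuous (V := R_CompleteNormedModule)).
  intros x _. apply (ex_derive_continuous (V := R_NormedModule)), Hf.
Qed.

Lemma RInt_mult_l (f : R -> R) (a b k : R) :
  ex_RInt f a b -> RInt (fun x => k * f x) a b = k * RInt f a b.
Proof.
  intros Hf. apply is_RInt_unique, (is_RInt_scal (V := R_NormedModule)).
  exact (RInt_correct (V := R_CompleteNormedModule) _ _ _ Hf).
Qed.

Lemma beta_moment_identity (W : R) (n : nat) :
  W ^ 2 * RInt (fun w => (W ^ 2 - w ^ 2) ^ n) 0 W =
  (3 + 2 * INR n) * RInt (fun w => (W ^ 2 - w ^ 2) ^ n * w ^ 2) 0 W.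
Proof.
  set (A := RInt (fun w => (W ^ 2 - w ^ 2) ^ n) 0 W : R).
  set (B := RInt (fun w => (W ^ 2 - w ^ 2) ^ n * w ^ 2) 0 W : R).
  assert (HA : is_RInt (fun w => (W ^ 2 - w ^ 2) ^ n) 0 W A)
    by (apply (RInt_correct (V := R_CompleteNormedModule)), ex_RInt_of_ex_derive;
        intros; auto_derive; auto).
  assert (HB : is_RInt (fun w => (W ^ 2 - w ^ 2) ^ n * w ^ 2) 0 W B)
    by (apply (RInt_correct (V := R_CompleteNormedModule)), ex_RInt_of_ex_derive;
        intros; auto_derive; auto).
  set (h := fun w => W ^ 2 * (W ^ 2 - w ^ 2) ^ n - (3 + 2 * INR n) * ((W ^ 2 - w ^ 2) ^ n * w ^ 2)).
  assert (Hlin : is_RInt h 0 W (W ^ 2 * A - (3 + 2 * INR n) * B))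
    by exact (is_RInt_minus _ _ _ _ _ _ (is_RInt_scal _ _ _ _ _ HA) (is_RInt_scal _ _ _ _ _ HB)).
  (* [h] is the derivative of [w (W^2 - w^2)^(n+1)], which vanishes at both ends. *)
  assert (Hftc : is_RInt h 0 W (minus (W * (W ^ 2 - W ^ 2) ^ S n) (0 * (W ^ 2 - 0 ^ 2) ^ S n))).
  { apply (is_RInt_derive (fun w => w * (W ^ 2 - w ^ 2) ^ S n)).
    - intros x _. auto_derive; auto. unfold h.
      replace (match n with 0%nat => 1 | S _ => INR n + 1 end) with (INR n + 1)
        by (destruct n; simpl; ring).
      replace (W * (W * 1) + - (x * (x * 1))) with (W ^ 2 - x ^ 2) by ring. ring.
    - intros x _. apply (ex_derive_continuous (V := R_NormedModule)). unfold h. auto_derive. auto. }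
  pose proof (is_RInt_unique _ _ _ _ Hlin) as E1. pose proof (is_RInt_unique _ _ _ _ Hftc) as E2.
  unfold minus, plus, opp in E2; simpl in E2. rewrite E1 in E2.
  assert (W ^ 2 * A - (3 + 2 * INR n) * B = 0) by (rewrite E2; ring). lra.
Qed.

Lemma RInt_sq_diff_pow_pos (W : R) (n : nat) : 0 < W -> 0 < RInt (fun w => (W ^ 2 - w ^ 2) ^ n) 0 W.
Proof.
  intros HW. apply RInt_gt_0; [exact HW | |].
  - intros w Hw. apply pow_lt. nra.
  - intros w _. apply (ex_derive_continuous (V := R_NormedModule)). auto_derive. auto.
Qed.

Lemma phi_arg_bounds (E0 V w : R) : 0 < V < E0 -> 0 <= w <= w_of V E0 ->
  (V / E0) ^ 2 * (w_of V E0 ^ 2 - w ^ 2) / 2 <= 1 - V * hypot1 w / E0 <=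
  V / E0 * (w_of V E0 ^ 2 - w ^ 2) / 2.
Proof.
  intros HVE Hw.
  set (W := w_of V E0) in *. set (S := hypot1 w). set (T := hypot1 W).
  assert (HT : V * T = E0) by (apply hypot1_w_of; lra).
  assert (HS1 : 1 <= S) by apply hypot1_ge_1.
  assert (HST : S <= T) by (unfold S, T; apply hypot1_le; lra).
  assert (HT' : V / E0 * T = 1) by (rewrite <- HT; field; lra).
  assert (HX : 1 - V * S / E0 = V / E0 * (T - S)) by (rewrite Rmult_minus_distr_l, HT'; field; lra).
  assert (HD : W ^ 2 - w ^ 2 = (T - S) * (T + S)).
  { pose proof (hypot1_sq w) as Hw2. pose proof (hypot1_sq W) as HW2.
    fold S in Hw2. fold T in HW2. nra. }
  rewrite HX, HD.
  assert (Hrho : 0 < V / E0) by (apply Rdiv_lt_0_compat; lra).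
  assert (HrhoST : V / E0 * (T + S) <= 2).
  { replace (V / E0 * (T + S)) with (1 + V * S / E0) by (rewrite Rmult_plus_distr_l, HT'; field; lra).
    assert (V * S / E0 <= 1) by (apply Rle_div_l; nra). lra. }
  assert (Hpos : 0 <= V / E0 * (T - S)) by (apply Rmult_le_pos; lra).
  split.
  - replace ((V / E0) ^ 2 * ((T - S) * (T + S)) / 2)
      with (V / E0 * (T - S) * (V / E0 * (T + S)) / 2) by (field; lra).
    nra.
  - replace (V / E0 * ((T - S) * (T + S)) / 2) with (V / E0 * (T - S) * (T + S) / 2) by (field; lra).
    nra.
Qed.

Section Envelopes.

Variables (phi : R -> R) (n : nat) (c eta d0 E0 V : R).
Hypothesis phi_near_0 :
  forall y, 0 <= y <= d0 -> (1 - eta) * c * y ^ n <= phi y <= (1 + eta) * c * y ^ n.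
Hypotheses (c_pos : 0 < c) (eta_range : 0 <= eta < 1) (V_pos : 0 < V) (V_lt_E0 : V < E0).
Hypothesis V_near_E0 : 1 - V / E0 <= d0.
Hypothesis phi_analytic : analytic_on_01 phi.

Let rho := V / E0.
Let W := w_of V E0.
Let C := V * c * (rho / 2) ^ n.

Lemma phi_arg_near_0 (w : R) : 0 <= w <= W ->
  let X := 1 - V * hypot1 w / E0 in
  0 <= X /\ phi_clamp phi X = phi X /\ (1 - eta) * c * X ^ n <= phi X <= (1 + eta) * c * X ^ n.
Proof.
  intros Hw X.
  destruct (phi_arg_bounds E0 V w ltac:(lra) Hw) as [HX _]. fold W X in HX.
  assert (HX0 : 0 <= X).
  { eapply Rle_trans; [|exact HX]. apply Rmult_le_pos; [|lra]. apply Rmult_le_pos; [apply pow2_ge_0|].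
    assert (w ^ 2 <= W ^ 2) by (apply pow_incr; lra). lra. }
  assert (HXd : X <= d0).
  { assert (V / E0 <= V * hypot1 w / E0) by (unfold Rdiv; pose proof (hypot1_ge_1 w);
      apply Rmult_le_compat_r; [left; apply Rinv_0_lt_compat; lra | nra]).
    unfold X. lra. }
  split; [exact HX0|]. split; [unfold phi_clamp; now rewrite Rmax_right | apply phi_near_0; lra].
Qed.

Lemma xi_w_integrand_2_upper (w : R) : 0 <= w <= W ->
  xi_w_integrand phi E0 V 2 w <= (1 + eta) * C * ((W ^ 2 - w ^ 2) ^ n * w ^ 2).
Proof.
  intros Hw. destruct (phi_arg_bounds E0 V w ltac:(lra) Hw) as [_ HXu].
  destruct (phi_arg_near_0 w Hw) as [HX0 [Hclamp [Hphil Hphi]]].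
  set (X := 1 - V * hypot1 w / E0) in *. fold W rho in HXu.
  assert (HXn : X ^ n <= (rho / 2) ^ n * (W ^ 2 - w ^ 2) ^ n).
  { rewrite <- Rpow_mult_distr. apply pow_incr. split; [lra|].
    replace (rho / 2 * (W ^ 2 - w ^ 2)) with (rho * (W ^ 2 - w ^ 2) / 2) by field. exact HXu. }
  pose proof (hypot1_ge_1 w). pose proof (pow2_ge_0 w).
  assert (Hphi0 : 0 <= phi X).
  { eapply Rle_trans; [|exact Hphil]. apply Rmult_le_pos; [nra | apply pow_le; lra]. }
  unfold xi_w_integrand, C. fold X. rewrite Hclamp.
  apply (Rle_trans _ (V * phi X * w ^ 2)).
  - apply Rle_div_l; [lra|].
    assert (0 <= V * phi X * w ^ 2) by (apply Rmult_le_pos; [apply Rmult_le_pos|]; lra). nra.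
  - assert (phi X <= (1 + eta) * c * ((rho / 2) ^ n * (W ^ 2 - w ^ 2) ^ n)).
    { eapply Rle_trans; [apply Hphi|]. apply Rmult_le_compat_l; [nra | exact HXn]. }
    replace ((1 + eta) * (V * c * (rho / 2) ^ n) * ((W ^ 2 - w ^ 2) ^ n * w ^ 2))
      with (V * ((1 + eta) * c * ((rho / 2) ^ n * (W ^ 2 - w ^ 2) ^ n)) * w ^ 2) by ring.
    apply Rmult_le_compat_r; [lra|]. apply Rmult_le_compat_l; lra.
Qed.

Lemma xi_w_integrand_0_lower (w : R) : 0 <= w <= W ->
  (1 - eta) * C * rho ^ S n * (W ^ 2 - w ^ 2) ^ n <= xi_w_integrand phi E0 V 0 w.
Proof.
  intros Hw. destruct (phi_arg_bounds E0 V w ltac:(lra) Hw) as [HXl _].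
  destruct (phi_arg_near_0 w Hw) as [HX0 [Hclamp [Hphi _]]].
  set (X := 1 - V * hypot1 w / E0) in *. fold W rho in HXl.
  assert (Hrho : 0 < rho) by (apply Rdiv_lt_0_compat; lra).
  assert (HD : 0 <= W ^ 2 - w ^ 2) by (assert (w ^ 2 <= W ^ 2) by (apply pow_incr; lra); lra).
  assert (HXn : rho ^ n * ((rho / 2) ^ n * (W ^ 2 - w ^ 2) ^ n) <= X ^ n).
  { rewrite <- !Rpow_mult_distr. apply pow_incr. split.
    - apply Rmult_le_pos; [lra|]. apply Rmult_le_pos; lra.
    - replace (rho * (rho / 2 * (W ^ 2 - w ^ 2))) with (rho ^ 2 * (W ^ 2 - w ^ 2) / 2) by field.
      exact HXl. }
  assert (Hhyp : rho * hypot1 w <= 1).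
  { assert (HrW : rho * hypot1 W = 1).
    { unfold rho. replace (V / E0 * hypot1 W) with (V * hypot1 W / E0) by (field; lra).
      unfold W. rewrite hypot1_w_of by lra. field. lra. }
    rewrite <- HrW. apply Rmult_le_compat_l; [lra|]. apply hypot1_le; lra. }
  pose proof (hypot1_ge_1 w).
  assert (Hlow : (1 - eta) * c * (rho ^ n * ((rho / 2) ^ n * (W ^ 2 - w ^ 2) ^ n)) <= phi X).
  { eapply Rle_trans; [|exact Hphi]. apply Rmult_le_compat_l; [nra | exact HXn]. }
  assert (Hpos : 0 <= (1 - eta) * c * (rho ^ n * ((rho / 2) ^ n * (W ^ 2 - w ^ 2) ^ n))).
  { apply Rmult_le_pos; [nra|]. apply Rmult_le_pos; [apply pow_le; lra|].
    apply Rmult_le_pos; apply pow_le; lra. }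
  unfold xi_w_integrand, C. fold X. rewrite Hclamp, pow_O, Rmult_1_r.
  assert (Hh : hypot1 w > 0) by lra.
  apply (Rle_div_r _ _ _ Hh).
  replace ((1 - eta) * (V * c * (rho / 2) ^ n) * rho ^ S n * (W ^ 2 - w ^ 2) ^ n * hypot1 w)
    with (V * ((1 - eta) * c * (rho ^ n * ((rho / 2) ^ n * (W ^ 2 - w ^ 2) ^ n))) * (rho * hypot1 w))
    by (simpl; ring).
  rewrite <- (Rmult_1_r (V * phi X)). apply Rmult_le_compat; try nra.
Qed.

Let A := RInt (fun w => (W ^ 2 - w ^ 2) ^ n) 0 W : R.

Lemma RInt_xi_w_integrand_2_upper :
  RInt (xi_w_integrand phi E0 V 2) 0 W <= (1 + eta) * C * (W ^ 2 / (3 + 2 * INR n) * A).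
Proof.
  assert (Hn : 0 < 3 + 2 * INR n) by (pose proof (pos_INR n); lra).
  pose proof (beta_moment_identity W n) as Hbeta. fold A in Hbeta.
  set (B := RInt (fun w => (W ^ 2 - w ^ 2) ^ n * w ^ 2) 0 W : R) in *.
  replace (W ^ 2 / (3 + 2 * INR n) * A) with B by (field_simplify_eq; lra). unfold B.
  rewrite <- RInt_mult_l by (apply ex_RInt_of_ex_derive; intros; auto_derive; auto).
  apply RInt_le; [apply Rlt_le, w_of_pos; lra | |
                  apply ex_RInt_of_ex_derive; intros; auto_derive; auto |].
  - apply (ex_RInt_continuous (V := R_CompleteNormedModule)).
    intros w _. apply xi_w_integrand_continuous; lra || auto.
  - intros w Hw. apply xi_w_integrand_2_upper. lra.
Qed.

Lemma RInt_xi_w_integrand_0_lower :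
  (1 - eta) * C * rho ^ S n * A <= RInt (xi_w_integrand phi E0 V 0) 0 W.
Proof.
  unfold A. rewrite <- RInt_mult_l by (apply ex_RInt_of_ex_derive; intros; auto_derive; auto).
  apply RInt_le; [apply Rlt_le, w_of_pos; lra |
                  apply ex_RInt_of_ex_derive; intros; auto_derive; auto | |].
  - apply (ex_RInt_continuous (V := R_CompleteNormedModule)).
    intros w _. apply xi_w_integrand_continuous; lra || auto.
  - intros w Hw. apply xi_w_integrand_0_lower. lra.
Qed.

Lemma RInt_xi_w_integrand_ratio (K : R) : 1 + eta <= K * (1 - eta) * rho ^ S n ->
  0 < RInt (xi_w_integrand phi E0 V 0) 0 W /\
  RInt (xi_w_integrand phi E0 V 2) 0 W <=
    K * W ^ 2 / (3 + 2 * INR n) * RInt (xi_w_integrand phi E0 V 0) 0 W.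
Proof.
  intros HK.
  assert (Hn : 0 < 3 + 2 * INR n) by (pose proof (pos_INR n); lra).
  assert (Hrho : 0 < rho) by (apply Rdiv_lt_0_compat; lra).
  assert (HA : 0 < A) by (apply RInt_sq_diff_pow_pos, w_of_pos; lra).
  assert (HC : 0 < C) by (apply Rmult_lt_0_compat; [nra | apply pow_lt; lra]).
  assert (HQ : 0 < (1 - eta) * rho ^ S n) by (apply Rmult_lt_0_compat; [|apply pow_lt]; lra).
  assert (HK0 : 0 <= K) by nra.
  assert (HB : 0 <= W ^ 2 / (3 + 2 * INR n) * A)
    by (apply Rmult_le_pos; [apply Rdiv_le_0_compat; [apply pow2_ge_0 | lra] | lra]).
  pose proof RInt_xi_w_integrand_2_upper as Hup. pose proof RInt_xi_w_integrand_0_lower as Hlow.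
  split.
  { eapply Rlt_le_trans; [|exact Hlow].
    replace ((1 - eta) * C * rho ^ S n * A) with ((1 - eta) * rho ^ S n * C * A) by ring.
    apply Rmult_lt_0_compat; [apply Rmult_lt_0_compat|]; lra. }
  apply (Rle_trans _ _ _ Hup).
  apply (Rle_trans _ (K * (1 - eta) * rho ^ S n * C * (W ^ 2 / (3 + 2 * INR n) * A))).
  - apply Rmult_le_compat_r; [exact HB|]. apply Rmult_le_compat_r; lra.
  - replace (K * (1 - eta) * rho ^ S n * C * (W ^ 2 / (3 + 2 * INR n) * A))
      with (K * W ^ 2 / (3 + 2 * INR n) * ((1 - eta) * C * rho ^ S n * A)) by (field; lra).
    apply Rmult_le_compat_l; [|exact Hlow].
    apply Rdiv_le_0_compat; [apply Rmult_le_pos; [exact HK0 | apply pow2_ge_0] | lra].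
Qed.

End Envelopes.

Lemma bernoulli_pow (x : R) (k : nat) : 0 <= x -> 1 - INR k * (1 - x) <= x ^ k.
Proof.
  intros Hx. induction k as [|k IH]; [simpl; lra|].
  rewrite S_INR. simpl.
  assert (0 <= x * (x ^ k - (1 - INR k * (1 - x)))) by (apply Rmult_le_pos; lra).
  assert (0 <= INR k * (1 - x) ^ 2) by (apply Rmult_le_pos; [apply pos_INR | apply pow2_ge_0]).
  nra.
Qed.

Lemma pow_near_1 (k : nat) (q d : R) : q < 1 -> 0 < d ->
  exists s, 0 < s <= d /\ s < 1 /\ forall x, 1 - s <= x -> q <= x ^ k.
Proof.
  intros Hq Hd.
  assert (Hk : 0 < INR k + 1) by (pose proof (pos_INR k); lra).
  set (t := (1 - q) / (INR k + 1)).
  assert (Ht : 0 < t /\ INR k * t <= 1 - q).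
  { split; [apply Rdiv_lt_0_compat; lra|]. unfold t.
    apply (Rmult_le_reg_r (INR k + 1)); [lra|].
    replace (INR k * ((1 - q) / (INR k + 1)) * (INR k + 1)) with (INR k * (1 - q)) by (field; lra).
    nra. }
  exists (Rmin d (Rmin (1 / 2) t)).
  pose proof (Rmin_l d (Rmin (1 / 2) t)). pose proof (Rmin_r d (Rmin (1 / 2) t)).
  pose proof (Rmin_l (1 / 2) t). pose proof (Rmin_r (1 / 2) t).
  assert (0 < Rmin d (Rmin (1 / 2) t)) by (repeat apply Rmin_pos; lra).
  split; [lra|]. split; [lra|]. intros x Hx.
  eapply Rle_trans; [|apply bernoulli_pow; lra].
  pose proof (pos_INR k). nra.
Qed.

Lemma xi_ratio_bound (I2 I0 E0 V W m : R) : 0 < I0 -> 0 < V -> 0 < m ->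
  W ^ 2 = (E0 / V) ^ 2 - 1 -> I2 <= 101 / 100 * W ^ 2 / m * I0 ->
  (4 * PI / V * I2) / (4 * PI / V * I0) <= 101 * (E0 + V) * (E0 - V) / (100 * m * V ^ 2).
Proof.
  intros HI0 HV Hm HW HI. pose proof PI_RGT_0.
  replace (101 * (E0 + V) * (E0 - V) / (100 * m * V ^ 2)) with (101 / 100 * W ^ 2 / m)
    by (rewrite HW; field; lra).
  replace ((4 * PI / V * I2) / (4 * PI / V * I0)) with (I2 / I0) by (field; lra).
  apply Rle_div_l; lra.
Qed.

Theorem mainTheorem5 (E0 : R) (phi : R -> R) (n : nat) :
  0 < E0 ->
  phi_assumptions phi n ->
  exists Vs, 0 < Vs < E0 /\
    forall V, Vs <= V < E0 ->
      exists x1 x2,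
        is_xi phi E0 (1/2) V x1 /\
        is_xi phi E0 (-1/2) V x2 /\
        x1 / x2 <= 101 * (E0 + V) * (E0 - V) / (100 * (3 + 2 * INR n) * V ^ 2).
Proof.
  intros HE0 Hphi.
  destruct (phi_local_bounds phi n (1 / 1000) ltac:(lra) Hphi) as [c [d0 [Hc [Hd0 Hnear]]]].
  destruct Hphi as [_ [_ [Han _]]].
  (* 199/200 works because 1 + 1/1000 <= 101/100 * (1 - 1/1000) * 199/200. *)
  destruct (pow_near_1 (S n) (199 / 200) d0 ltac:(lra) Hd0) as [s [Hs [Hs1 Hpow]]].
  exists (E0 * (1 - s)). split; [split; nra|]. intros V HV.
  assert (Hrho : 1 - s <= V / E0) by (apply Rle_div_r; lra).
  destruct (RInt_xi_w_integrand_ratio phi n c (1 / 1000) d0 E0 V Hnear Hc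
              ltac:(lra) ltac:(nra) ltac:(lra) ltac:(lra) Han (101 / 100)
              ltac:(specialize (Hpow _ Hrho); lra)) as [HI0 HI2].
  exists (4 * PI / V * RInt (xi_w_integrand phi E0 V 2) 0 (w_of V E0)),
         (4 * PI / V * RInt (xi_w_integrand phi E0 V 0) 0 (w_of V E0)).
  split; [|split].
  - replace (1 / 2) with ((INR 2 - 1) / 2) by (simpl; field). apply is_xi_transformed; auto; nra.
  - replace (-1 / 2) with ((INR 0 - 1) / 2) by (simpl; field). apply is_xi_transformed; auto; nra.
  - apply (xi_ratio_bound _ _ E0 V (w_of V E0)); auto; [nra | pose proof (pos_INR n); lra | ].
    apply w_of_sq. nra.
Qed.
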